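(* Let $\{\ket{j}\}_{j=0}^{7}$ be the computational basis of three qubits, where $\ket{j}=\ket{j_1j_2j_3}$ with $j=4j_1+2j_2+j_3$, and let $$\ket{\psi_1}=\frac{1}{2\sqrt{2}}\left(\ket{0}+\ket{1}+\ket{2}+\ket{3}+\ket{4}+\ket{5}+\ket{6}-\ket{7}\right),\qquad \rho_1=\ket{\psi_1}\bra{\psi_1}.$$ Denote by $A_1,B_1,C_1$ the first, second and third qubits of $\rho_1$. Then $$D(B_1C_1|A_1)=D(A_1C_1|B_1)=D(A_1B_1|C_1)=D(C_1|A_1B_1)=D(B_1|A_1C_1)=D(A_1|B_1C_1)=-\tfrac{1}{4}\log\tfrac{1}{4}-\tfrac{3}{4}\log\tfrac{3}{4}\approx 0.81.$$
   Context: Logarithms are base 2, and $S(\sigma)=-\mathrm{Tr}(\sigma\log\sigma)$ is the von Neumann entropy. For a state $\rho_{XY}$ on a bipartite system $X\otimes Y$ (here $X$ and $Y$ are complementary groups of the three qubits), the quantum discord with measurement on $X$ is $$D(Y|X)=\min_{\{E_a\}}\sum_a p_a S(\rho_{Y|a})+S(\rho_X)-S(\rho_{XY}),$$ where the minimum is over all POVMs $\{E_a\}$ on $X$ ($E_a\ge 0$, $\sum_a E_a=I$), $p_a=\mathrm{Tr}((E_a\otimes I)\rho_{XY})$, $\rho_{Y|a}=\mathrm{Tr}_X((E_a\otimes I)\rho_{XY})/p_a$, and $\rho_X,\rho_Y$ are reduced states. For example $D(B_1C_1|A_1)$ is the discord of $\rho_1$ viewed as a state on $A_1\otimes (B_1C_1)$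 with measurement on $A_1$, and $D(C_1|A_1B_1)$ is the discord with measurement on $A_1B_1$. *)

From HB Require Import structures.
From mathcomp Require Import all_boot all_order all_algebra.
From mathcomp Require Import complex mxtens.
From mathcomp Require Import boolp classical_sets reals exp.

Set Implicit Arguments.
Unset Strict Implicit.
Unset Printing Implicit Defensive.

Import Order.TTheory GRing.Theory Num.Theory.
Local Open Scope ring_scope.

Section QuantumDiscord.
Variable R : realType.
Local Notation C := R[i].

Definition rC (x : R) : C := Complex x 0.

Definition adjmx m n (A : 'M[C]_(m, n)) : 'M[C]_(n, m) := map_mx Num.conj A^T.

Definition log2 (x : R) : R := ln x / ln 2.
Definition xlog2x (x : R) : R := if x == 0 then 0 else x * log2 x.

(** s is the list of eigenvalues (with multiplicity) of A, all real *)
Definition spectrum n (A : 'M[C]_n) (s : seq R) : Prop :=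
  char_poly A = \prod_(x <- s) ('X - (rC x)%:P).

(** von Neumann entropy S(A) = - Tr (A log A) = - sum_i l_i log l_i
    over the eigenvalues l_i of the (Hermitian) matrix A *)
Definition vN_entropy n (A : 'M[C]_n) : R :=
  - \sum_(x <- xget [::] [set s | spectrum A s]) xlog2x x.

Definition psd n (A : 'M[C]_n) : Prop :=
  adjmx A = A /\ forall v : 'cV[C]_n, 0 <= (adjmx v *m A *m v) 0 0.

Definition povm m k (E : 'I_k -> 'M[C]_m) : Prop :=
  (forall a, psd (E a)) /\ \sum_(a < k) E a = 1%:M.

(** partial traces on C^m (x) C^n (Kronecker index convention of tensmx:
    the pair (i,k) has index i * n + k) *)
Definition ptrace1 m n (A : 'M[C]_(m * n)) : 'M[C]_n :=
  \matrix_(k, l) \sum_(i < m) A (mxtens_index (i, k)) (mxtens_index (i, l)).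
Definition ptrace2 m n (A : 'M[C]_(m * n)) : 'M[C]_m :=
  \matrix_(i, j) \sum_(k < n) A (mxtens_index (i, k)) (mxtens_index (j, k)).

(** p_a S(rho_{Y|a}) for one POVM element E_a on X = C^m *)
Definition cond_term m n (rho : 'M[C]_(m * n)) (Ea : 'M[C]_m) : R :=
  let M := (tensmx Ea (1%:M : 'M[C]_n)) *m rho in
  let p := \tr M in
  complex.Re p * vN_entropy (p^-1 *: ptrace1 M).

(** quantum discord D(Y|X) of rho on X (x) Y = C^m (x) C^n, measurement on X;
    the minimum over POVMs (any finite number of outcomes) is taken as inf *)
Definition discord m n (rho : 'M[C]_(m * n)) : R :=
  inf [set x : R | exists k (E : 'I_k -> 'M[C]_m),
                     povm E /\ x = \sum_(a < k) cond_term rho (E a)]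
  + vN_entropy (ptrace2 rho) - vN_entropy rho.

(** three qubits: basis |j> = |j1 j2 j3>, j = 4 j1 + 2 j2 + j3;
    bit j q = j_(q+1) for q = 0,1,2 *)
Definition bit (j q : nat) : nat := (j %/ 2 ^ (2 - q)) %% 2.

(** reordering of the qubits: new qubit q is old qubit s q *)
Definition reorder_idx (s : nat -> nat) (j : 'I_8) : 'I_8 :=
  inord (\sum_(q < 3) bit j q * 2 ^ (2 - s q)).
Definition reorder (s : nat -> nat) (rho : 'M[C]_8) : 'M[C]_8 :=
  \matrix_(i, j) rho (reorder_idx s i) (reorder_idx s j).

Definition psi1 : 'cV[C]_8 :=
  \col_(j < 8) rC ((if j == 7 :> nat then -1 else 1) / (2 * Num.sqrt 2)).
Definition rho1 : 'M[C]_8 := psi1 *m adjmx psi1.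

End QuantumDiscord.

(** orders of the qubits (A,B,C) = (0,1,2) with the measured group first *)
Definition ord_ABC (q : nat) : nat := nth 0 [:: 0; 1; 2] q.
Definition ord_BAC (q : nat) : nat := nth 0 [:: 1; 0; 2] q.
Definition ord_CAB (q : nat) : nat := nth 0 [:: 2; 0; 1] q.
Definition ord_ACB (q : nat) : nat := nth 0 [:: 0; 2; 1] q.
Definition ord_BCA (q : nat) : nat := nth 0 [:: 1; 2; 0] q.

From HB Require Import structures.
From mathcomp Require Import all_boot all_order all_algebra.
From mathcomp Require Import complex mxtens.
From mathcomp Require Import boolp classical_sets reals exp.
From mathcomp Require Import ring lra.
Import Order.TTheory GRing.Theory Num.Theory.
Local Open Scope ring_scope.
Set Implicit Arguments.
Unset Strict Implicit.
Unset Printing Implicit Defensive.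

(* For a pure state rho = psi psi^*, a rank-one POVM element u u^* on X leaves Y
   in a pure state (proportional to the conjugate of Psi^* u, where Psi is the
   m x n coefficient matrix of psi), so measuring X in the computational basis
   gives conditional entropy 0, while every conditional term is nonnegative.
   Hence the infimum in the discord is 0 and, as S(rho) = 0, D(Y|X) = S(rho_X).
   Only |111> carries a minus sign in psi_1, so rho_1 is invariant under every
   permutation of the qubits and the six discords reduce to the entropies of a
   one- and a two-qubit marginal.  Both have nonzero spectrum {3/4, 1/4}, the
   second by Sylvester's identity det(X - Psi Psi^* ) = X^(m-n) det(X - Psi^* Psi). *)

(* Sylvester's identity, from the two triangular factorisations of [[X, A], [B, 1]]. *)
Lemma char_poly_mulmxC (F : comNzRingType) n r (A : 'M[F]_(n, r)) (B : 'M[F]_(r, n)) :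
  'X^r * char_poly (A *m B) = 'X^n * char_poly (B *m A).
Proof.
pose a := map_mx polyC A; pose b := map_mx polyC B.
pose M := block_mx ('X%:M : 'M_n) a b (1%:M : 'M_r).
have E1 : block_mx 1%:M (- a) 0 1%:M *m M = block_mx (char_poly_mx (A *m B)) 0 b 1%:M.
  rewrite mulmx_block !mul1mx !mul0mx !add0r mulNmx mulmx1 addrN.
  by rewrite /char_poly_mx map_mxM.
have E2 : block_mx 1%:M 0 (- b) ('X%:M) *m M = block_mx ('X%:M) a 0 (char_poly_mx (B *m A)).
  rewrite mulmx_block !mul1mx !mul0mx !addr0 mulNmx mul_mx_scalar mul_scalar_mx addNr.
  by rewrite /char_poly_mx map_mxM mulmx1 addrC mulNmx.
have := congr1 determinant E2; rewrite det_mulmx det_lblock det_ublock !det_scalar.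
have := congr1 determinant E1; rewrite det_mulmx det_lblock det_ublock !det1 !mul1r mulr1.
by move=> ->; rewrite expr1n mul1r => ->.
Qed.

Lemma char_poly_mulmx_addl (F : idomainType) d r
    (A : 'M[F]_(d + r, r)) (B : 'M[F]_(r, d + r)) :
  char_poly (A *m B) = 'X^d * char_poly (B *m A).
Proof.
apply: (@mulfI _ 'X^r); first by rewrite expf_neq0 // polyX_eq0.
by rewrite char_poly_mulmxC exprD mulrA [_ * 'X^r]mulrC.
Qed.

Lemma char_poly_rank1 (F : idomainType) n (u : 'cV[F]_n.+1) (v : 'rV[F]_n.+1) :
  char_poly (u *m v) = 'X^n * ('X - (\tr (u *m v))%:P).
Proof.
apply: (@mulfI _ 'X); first by rewrite polyX_eq0.
have := char_poly_mulmxC u v; rewrite expr1 exprS -mulrA => ->; congr (_ * (_ * _)).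
by rewrite mxtrace_mulC trace_mx11 /char_poly det_mx11 !mxE eqxx mulr1n.
Qed.

Lemma char_poly_mx2 (F : comNzRingType) (A : 'M[F]_2) :
  char_poly A = ('X - (A 0 0)%:P) * ('X - (A 1 1)%:P) - (A 0 1 * A 1 0)%:P.
Proof.
rewrite /char_poly (expand_det_row _ 0) !big_ord_recl big_ord0 /cofactor !det_mx11 !mxE /=.
have -> : lift 0 0 = 1 :> 'I_2 by apply/val_inj.
have -> : lift 1 0 = 0 :> 'I_2 by apply/val_inj.
rewrite polyCM mulr1n mulr0n !add0r addr0 expr0 expr1 mul1r.
ring.
Qed.

Lemma sum_mxtens_index (V : nmodType) m n (F : 'I_(m * n) -> V) :
  \sum_x F x = \sum_(i < m) \sum_(k < n) F (mxtens_index (i, k)).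
Proof.
rewrite (reindex (@mxtens_index m n)) /=; last first.
  by exists (@mxtens_unindex m n) => i _; rewrite (mxtens_indexK, mxtens_unindexK).
by rewrite pair_big; apply: eq_bigr => -[].
Qed.

Section PureStates.
Variable R : realType.
Local Notation C := R[i].

Lemma rCE (x : R) : rC x = real_complex R x.
Proof. by []. Qed.

Lemma rC_inj : injective (@rC R).
Proof. by move=> x y []. Qed.

Lemma rC_ge0 (x : R) : (0 <= rC x) = (0 <= x).
Proof. by rewrite rCE ler0c. Qed.

Lemma rC_le1 (x : R) : (rC x <= 1) = (x <= 1).
Proof. by rewrite rCE -(rmorph1 (real_complex R)) lecR. Qed.

Lemma conj_rC (x : R) : Num.conj (rC x) = rC x.
Proof. by apply/eqP; rewrite eq_complex /= oppr0 !eqxx. Qed.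

Lemma adjmxM m n p (A : 'M[C]_(m, n)) (B : 'M[C]_(n, p)) :
  adjmx (A *m B) = adjmx B *m adjmx A.
Proof. by rewrite /adjmx trmx_mul map_mxM. Qed.

Lemma adjmxK m n (A : 'M[C]_(m, n)) : adjmx (adjmx A) = A.
Proof. by apply/matrixP => i j; rewrite !mxE conjCK. Qed.

Lemma adjmx_conj m n (A : 'M[C]_(m, n)) : adjmx (map_mx Num.conj A) = A^T.
Proof. by apply/matrixP => i j; rewrite !mxE conjCK. Qed.

Lemma adjmx_delta m n (i : 'I_m) (j : 'I_n) :
  adjmx (delta_mx i j) = delta_mx j i :> 'M[C]_(n, m).
Proof.
by apply/matrixP => k l; rewrite !mxE andbC; case: (_ && _); rewrite ?conjC1 ?conjC0.
Qed.

Lemma trmx_rank1 m (w : 'cV[C]_m) :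
  (w *m adjmx w)^T = map_mx Num.conj w *m adjmx (map_mx Num.conj w).
Proof.
by rewrite trmx_mul adjmx_conj; congr (_ *m _); apply/matrixP => i j; rewrite !mxE.
Qed.

Lemma mul_adjmx_gt0 n (v : 'rV[C]_n) : v != 0 -> 0 < (v *m adjmx v) 0 0.
Proof.
move=> vN0; have vvE : (v *m adjmx v) 0 0 = \sum_k v 0 k * (v 0 k)^*.
  by rewrite mxE; apply: eq_bigr => k _; rewrite !mxE.
rewrite vvE lt_def sumr_ge0 ?andbT => [|k _]; last exact: mul_conjC_ge0.
apply: contra vN0 => /eqP/psumr_eq0P vv0; apply/eqP/matrixP => i k.
rewrite ord1 !mxE; apply/eqP; rewrite -mul_conjC_eq0; apply/eqP.
by apply: vv0 => // l _; exact: mul_conjC_ge0.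
Qed.

Definition qform n (A : 'M[C]_n) (v : 'cV[C]_n) : C := (adjmx v *m A *m v) 0 0.

Lemma qformZ n c (A : 'M[C]_n) v : qform (c *: A) v = c * qform A v.
Proof. by rewrite /qform -scalemxAr -scalemxAl mxE. Qed.

Lemma qform_delta n (A : 'M[C]_n) k : qform A (delta_mx k 0) = A k k.
Proof. by rewrite /qform adjmx_delta -rowE -colE !mxE. Qed.

Lemma qform_trmx n (A : 'M[C]_n) v : qform A^T v = qform A (map_mx Num.conj v).
Proof.
rewrite /qform -(trmxK (adjmx v *m A^T *m v)) [in LHS]mxE !trmx_mul trmxK.
rewrite mulmxA adjmx_conj.
by congr ((_ *m _ *m _) 0 0); apply/matrixP => i j; rewrite !mxE.
Qed.

Lemma qform_congr m n (A : 'M[C]_m) (Q : 'M[C]_(m, n)) v :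
  qform (adjmx Q *m A *m Q) v = qform A (Q *m v).
Proof. by rewrite /qform adjmxM !mulmxA. Qed.

Lemma qform_rank1_ge0 n (u v : 'cV[C]_n) : 0 <= qform (u *m adjmx u) v.
Proof.
rewrite /qform !mulmxA -[adjmx v *m u]adjmxK adjmxM adjmxK -mulmxA mxE big_ord1.
by rewrite !mxE mulrC mul_conjC_ge0.
Qed.

Lemma mxtrace_ge0 n (A : 'M[C]_n) : (forall v, 0 <= qform A v) -> 0 <= \tr A.
Proof. by move=> A_ge0; apply: sumr_ge0 => k _; rewrite -qform_delta. Qed.

Lemma spectrum_perm_eq n (A : 'M[C]_n) s t : spectrum A s -> spectrum A t -> perm_eq s t.
Proof.
move=> As At; apply: (perm_map_inj rC_inj); apply: prod_XsubC_eq.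
by rewrite !big_map -As -At.
Qed.

Lemma spectrum0 (A : 'M[C]_0) : spectrum A [::].
Proof. by rewrite /spectrum big_nil /char_poly det_mx00. Qed.

Lemma spectrum_rank1 n (u : 'cV[C]_n.+1) (v : 'rV[C]_n.+1) t :
  \tr (u *m v) = rC t -> spectrum (u *m v) (t :: nseq n 0).
Proof.
move=> trE; rewrite /spectrum char_poly_rank1 trE big_cons mulrC.
by rewrite big_nseq iter_mulr_1 rCE rmorph0 subr0.
Qed.

Lemma spectrum_trace n (A : 'M[C]_n) s : spectrum A s -> \tr A = rC (\sum_(x <- s) x).
Proof.
move=> As; have size_s : size s = n.
  by have := size_char_poly A; rewrite As size_prod_XsubC => -[].
case: n A As size_s => [|n] A As size_s.
  by rewrite (size0nil size_s) big_nil /mxtrace big_ord0.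
have := char_poly_trace A isT; rewrite As -(big_map (@rC R) xpredT (fun y => 'X - y%:P)).
rewrite -[n]/(n.+1.-1) -[in X in _`_X]size_s -(size_map (@rC R)).
rewrite coefPn_prod_XsubC ?size_map ?size_s // => /oppr_inj <-.
by rewrite big_map rCE rmorph_sum.
Qed.

Lemma spectrum_ge0 n (A : 'M[C]_n) s :
  (forall v, 0 <= qform A v) -> spectrum A s -> {in s, forall x, 0 <= x}.
Proof.
move=> A_ge0 As x xs.
have /eigenvalueP[v vA vN0] : eigenvalue A (rC x).
  rewrite eigenvalue_root_char As -(big_map (@rC R) xpredT (fun y => 'X - y%:P)).
  by rewrite root_prod_XsubC map_f.
have := A_ge0 (adjmx v); rewrite /qform adjmxK vA -scalemxAl mxE.
by rewrite pmulr_lge0 ?mul_adjmx_gt0 // rC_ge0.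
Qed.

Lemma vN_entropy_spectrum n (A : 'M[C]_n) s :
  spectrum A s -> vN_entropy A = - \sum_(x <- s) xlog2x x.
Proof.
move=> As; rewrite /vN_entropy; congr (- _); apply/perm_big/(spectrum_perm_eq _ As).
exact: (xgetI [::] (P := [set s | spectrum A s])) As.
Qed.

Lemma xlog2x0 : xlog2x (0 : R) = 0.
Proof. by rewrite /xlog2x eqxx. Qed.

Lemma xlog2x1 : xlog2x (1 : R) = 0.
Proof. by rewrite /xlog2x oner_eq0 mul1r /log2 ln1 mul0r. Qed.

Lemma xlog2x_le0 (x : R) : 0 <= x -> x <= 1 -> xlog2x x <= 0.
Proof.
move=> x_ge0 x_le1; rewrite /xlog2x; case: eqP => // _.
rewrite mulr_ge0_le0 // mulr_le0_ge0 ?ln_le0 // invr_ge0 ltW // ln_gt0 //.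
by rewrite (_ : 1 = 1%:R) // ltr_nat.
Qed.

Lemma vN_entropy_ge0 n (A : 'M[C]_n) :
  (forall v, 0 <= qform A v) -> \tr A <= 1 -> 0 <= vN_entropy A.
Proof.
move=> A_ge0 trA; rewrite /vN_entropy.
case: xgetP => [s _ As|_]; last by rewrite big_nil oppr0.
have s_ge0 := spectrum_ge0 A_ge0 As.
have sum_le1 : \sum_(x <- s) x <= 1 by rewrite -rC_le1 -(spectrum_trace As).
rewrite oppr_ge0 big_seq sumr_le0 // => x xs; rewrite xlog2x_le0 ?s_ge0 //.
rewrite (le_trans _ sum_le1) // (big_rem x xs) /= lerDl big_seq sumr_ge0 //.
by move=> y /mem_rem /s_ge0.
Qed.

Lemma vN_entropy_rank1 n (u : 'cV[C]_n) (v : 'rV[C]_n) t :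
  \tr (u *m v) = rC t -> vN_entropy (u *m v) = - xlog2x t.
Proof.
case: n u v => [|n] u v trE.
  have -> : t = 0 by apply: rC_inj; rewrite -trE /mxtrace big_ord0.
  by rewrite (vN_entropy_spectrum (spectrum0 _)) big_nil xlog2x0 oppr0.
rewrite (vN_entropy_spectrum (spectrum_rank1 trE)) big_cons big_nseq xlog2x0.
by rewrite iter_addr_0 mul0rn addr0.
Qed.

Definition coefmx m n (psi : 'cV[C]_(m * n)) : 'M[C]_(m, n) :=
  \matrix_(i, k) psi (mxtens_index (i, k)) 0.

Lemma mxtrace_ptrace1 m n (M : 'M[C]_(m * n)) : \tr (ptrace1 M) = \tr M.
Proof.
by rewrite /mxtrace sum_mxtens_index exchange_big; apply: eq_bigr => k _; rewrite mxE.
Qed.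

Lemma ptrace1_pure m n (E : 'M[C]_m) (psi : 'cV[C]_(m * n)) :
  ptrace1 (tensmx E 1%:M *m (psi *m adjmx psi)) = (adjmx (coefmx psi) *m E *m coefmx psi)^T.
Proof.
apply/matrixP => k l; rewrite !mxE.
under [RHS]eq_bigr => j _ do rewrite mxE mulr_suml.
rewrite exchange_big; apply: eq_bigr => i _.
rewrite mxE sum_mxtens_index; apply: eq_bigr => j _.
rewrite (bigD1 k) //= big1 ?addr0.
  by rewrite tensmxE !mxE big_ord1 !mxE eqxx mulr1n mulr1; ring.
by move=> k' k'k; rewrite tensmxE !mxE eq_sym (negbTE k'k) mulr0n mulr0 mul0r.
Qed.

Lemma ptrace1_pure_coefmx m n (psi : 'cV[C]_(m * n)) :
  ptrace1 (psi *m adjmx psi) = (adjmx (coefmx psi) *m coefmx psi)^T.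
Proof.
by apply/matrixP => k l; rewrite !mxE; apply: eq_bigr => i _; rewrite !mxE big_ord1 !mxE mulrC.
Qed.

Lemma ptrace2_pure m n (psi : 'cV[C]_(m * n)) :
  ptrace2 (psi *m adjmx psi) = coefmx psi *m adjmx (coefmx psi).
Proof.
by apply/matrixP => i j; rewrite !mxE; apply: eq_bigr => k _; rewrite !mxE big_ord1 !mxE.
Qed.

Lemma spectrum_ptrace2_pure d n (psi : 'cV[C]_((d + n) * n)) s :
  spectrum (adjmx (coefmx psi) *m coefmx psi) s ->
  spectrum (ptrace2 (psi *m adjmx psi)) (nseq d 0 ++ s).
Proof.
move=> sE; rewrite /spectrum ptrace2_pure char_poly_mulmx_addl sE big_cat /=.
by rewrite big_nseq iter_mulr_1 rCE rmorph0 subr0.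
Qed.

Lemma vN_entropy_ptrace2_pure d n (psi : 'cV[C]_((d + n) * n)) s :
  spectrum (adjmx (coefmx psi) *m coefmx psi) s ->
  vN_entropy (ptrace2 (psi *m adjmx psi)) = vN_entropy (adjmx (coefmx psi) *m coefmx psi).
Proof.
move=> sE; rewrite (vN_entropy_spectrum sE) (vN_entropy_spectrum (spectrum_ptrace2_pure sE)).
by rewrite big_cat /= big_nseq xlog2x0 iter_addr_0 mul0rn add0r.
Qed.

Lemma psd_rank1 m (u : 'cV[C]_m) : psd (u *m adjmx u).
Proof. by split=> [|v]; [rewrite adjmxM adjmxK | exact: qform_rank1_ge0]. Qed.

Lemma delta_mx_rank1 m (a : 'I_m) :
  delta_mx a a = delta_mx a (0 : 'I_1) *m adjmx (delta_mx a (0 : 'I_1)) :> 'M[C]_m.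
Proof. by rewrite adjmx_delta mul_delta_mx. Qed.

Lemma povm_delta m : povm (fun a : 'I_m => delta_mx a a : 'M[C]_m).
Proof.
split=> [a|]; first by rewrite delta_mx_rank1; exact: psd_rank1.
apply/matrixP => i j; rewrite summxE !mxE (bigD1 i) //= big1 ?addr0.
  by rewrite !mxE eqxx /= eq_sym.
by move=> a /negbTE ai; rewrite !mxE eq_sym ai.
Qed.

Lemma cond_term_pure_ge0 m n (psi : 'cV[C]_(m * n)) (E : 'M[C]_m) :
  (forall v, 0 <= qform E v) -> 0 <= cond_term (psi *m adjmx psi) E.
Proof.
move=> E_ge0; rewrite /cond_term /= -(mxtrace_ptrace1 (tensmx _ _ *m _)) ptrace1_pure.
set P := adjmx _ *m E *m _.
have P_ge0 v : 0 <= qform P^T v by rewrite qform_trmx qform_congr.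
have trP_ge0 : 0 <= \tr P^T := mxtrace_ge0 P_ge0.
rewrite mulr_ge0 //; first by move: trP_ge0; rewrite lecE => /andP[].
apply: vN_entropy_ge0 => [v|]; first by rewrite qformZ mulr_ge0 // invr_ge0.
by rewrite mxtraceZ; have [->|?] := eqVneq (\tr P^T) 0; rewrite ?mulr0 ?mulVf.
Qed.

Lemma cond_term_pure_rank1 m n (psi : 'cV[C]_(m * n)) (u : 'cV[C]_m) :
  cond_term (psi *m adjmx psi) (u *m adjmx u) = 0.
Proof.
rewrite /cond_term /= -(mxtrace_ptrace1 (tensmx _ _ *m _)) ptrace1_pure.
set w := adjmx (coefmx psi) *m u.
have -> : adjmx (coefmx psi) *m (u *m adjmx u) *m coefmx psi = w *m adjmx w.
  by rewrite adjmxM adjmxK !mulmxA.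
rewrite trmx_rank1; set p := \tr _.
have [->|pN0] := eqVneq p 0; first by rewrite mul0r.
rewrite scalemxAl (vN_entropy_rank1 (t := 1)) ?xlog2x1 ?oppr0 ?mulr0 //.
by rewrite -scalemxAl mxtraceZ mulVf.
Qed.

Lemma inf_attained (E : set R) x : E x -> lbound E x -> inf E = x.
Proof.
move=> Ex lbx; apply/le_anti/andP; split; last by apply: lb_le_inf => //; exists x.
by apply: (ge_inf _ Ex); exists x.
Qed.

Lemma discord_pure m n (psi : 'cV[C]_(m * n)) :
  \tr (psi *m adjmx psi) = 1 ->
  discord (psi *m adjmx psi) = vN_entropy (ptrace2 (psi *m adjmx psi)).
Proof.
move=> tr1; rewrite /discord (vN_entropy_rank1 (t := 1)) // xlog2x1 oppr0 subr0.
rewrite (@inf_attained _ 0) ?add0r // => [|x [k [E [[E_ge0 _] ->]]]].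
  exists m, (fun a => delta_mx a a); split; first exact: povm_delta.
  by rewrite big1 // => a _; rewrite delta_mx_rank1 cond_term_pure_rank1.
by apply: sumr_ge0 => a _; apply: cond_term_pure_ge0; case: (E_ge0 a).
Qed.

End PureStates.

(* [reorder_idx s j] without the [inord] and the big sum, so that [fixes_top s]
   can be decided by evaluation. *)
Definition reorder_nat (s : nat -> nat) (j : nat) : nat :=
  bit j 0 * 2 ^ (2 - s 0) + bit j 1 * 2 ^ (2 - s 1) + bit j 2 * 2 ^ (2 - s 2).

Definition fixes_top (s : nat -> nat) : bool :=
  all (fun j => (reorder_nat s j < 8)%N && ((reorder_nat s j == 7) == (j == 7))) (iota 0 8).

Section ThreeQubits.
Variable R : realType.
Local Notation C := R[i].

Definition psi1_sign (j : nat) : R := if j == 7 then -1 else 1.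

Lemma rho1E (i j : 'I_8) : rho1 R i j = rC (psi1_sign i * psi1_sign j / 8).
Proof.
rewrite /rho1 !mxE big_ord1 !mxE conj_rC !rCE -rmorphM mulf_div.
congr (real_complex R (_ / _)).
by rewrite mulrACA -!expr2 sqr_sqrtr ?ler0n // -natrX -natrM.
Qed.

Lemma reorder_rho1 s : fixes_top s -> reorder s (rho1 R) = rho1 R.
Proof.
move=> /allP s_top; apply/matrixP => i j; rewrite mxE !rho1E /psi1_sign.
suff top k : (reorder_idx s k == 7 :> nat) = (k == 7 :> nat) by rewrite !top.
have k8 : val k \in iota 0 8 by rewrite mem_iota ltn_ord.
have /andP[lt8 /eqP <-] := s_top _ k8.
by rewrite /reorder_idx !big_ord_recl big_ord0 addn0 addnA inordK.
Qed.

Definition rho1_qubit : 'M[C]_2 := \matrix_(i, j) rC (if i == j then 1/2 else 1/4).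

Lemma ptrace2_rho1 : @ptrace2 R 2 4 (rho1 R) = rho1_qubit.
Proof.
apply/matrixP => i j; rewrite !mxE !big_ord_recl big_ord0 !rho1E !rCE -!rmorphD.
congr (real_complex R _).
case: i => -[|[|//]] ?; case: j => -[|[|//]] ? /=; rewrite /psi1_sign /=; lra.
Qed.

Lemma ptrace1_rho1 : @ptrace1 R 4 2 (rho1 R) = rho1_qubit.
Proof.
apply/matrixP => i j; rewrite !mxE !big_ord_recl big_ord0 !rho1E !rCE -!rmorphD.
congr (real_complex R _).
case: i => -[|[|//]] ?; case: j => -[|[|//]] ? /=; rewrite /psi1_sign /=; lra.
Qed.

Lemma trmx_rho1_qubit : rho1_qubit^T = rho1_qubit.
Proof. by apply/matrixP => i j; rewrite !mxE eq_sym. Qed.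

Lemma spectrum_rho1_qubit : spectrum rho1_qubit [:: 3/4; 1/4].
Proof.
have quarter x k : x = k%:R / 4 -> rC x = rC (1/4) *+ k :> C.
  by move=> ->; rewrite !rCE -rmorphMn mul1r mulr_natl.
rewrite /spectrum char_poly_mx2 !mxE /= !big_cons big_nil.
(* all constants become multiples of rC (1/4), which [ring] treats as an atom *)
rewrite (quarter (1/2) 2); last by lra.
rewrite (quarter (3/4) 3); last by lra.
by rewrite polyCM !polyCMn; ring.
Qed.

Lemma trace_rho1 : \tr (rho1 R) = 1.
Proof.
rewrite /mxtrace !big_ord_recl big_ord0 !rho1E !rCE -!rmorphD -(rmorph1 (real_complex R)).
by congr (real_complex R _); rewrite /psi1_sign /=; lra.
Qed.

Lemma vN_entropy_rho1_qubit :
  vN_entropy rho1_qubit = - (1/4) * log2 (1/4) - (3/4) * log2 (3/4) :> R.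
Proof.
rewrite (vN_entropy_spectrum spectrum_rho1_qubit) !big_cons big_nil /xlog2x.
by rewrite !gt_eqF ?addr0; lra.
Qed.

Lemma discord_rho1_2_4 :
  @discord R 2 4 (rho1 R) = - (1/4) * log2 (1/4) - (3/4) * log2 (3/4).
Proof.
rewrite (@discord_pure _ 2 4 (psi1 R)) ?trace_rho1 // -/(rho1 R).
by rewrite ptrace2_rho1 vN_entropy_rho1_qubit.
Qed.

Lemma gram_coefmx_psi1 :
  adjmx (@coefmx R 4 2 (psi1 R)) *m @coefmx R 4 2 (psi1 R) = rho1_qubit.
Proof. by rewrite -[LHS]trmxK -ptrace1_pure_coefmx ptrace1_rho1 trmx_rho1_qubit. Qed.

Lemma discord_rho1_4_2 :
  @discord R 4 2 (rho1 R) = - (1/4) * log2 (1/4) - (3/4) * log2 (3/4).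
Proof.
rewrite (@discord_pure _ 4 2 (psi1 R)) ?trace_rho1 //.
rewrite (@vN_entropy_ptrace2_pure _ 2 2 _ [:: 3/4; 1/4]) gram_coefmx_psi1 //.
  exact: vN_entropy_rho1_qubit.
exact: spectrum_rho1_qubit.
Qed.

End ThreeQubits.

Theorem lemma1 (R : realType) :
  let v : R := - (1/4) * log2 (1/4) - (3/4) * log2 (3/4) in
  (* D(B1C1|A1) *) @discord R 2 4 (reorder ord_ABC (rho1 R)) = v /\
  (* D(A1C1|B1) *) @discord R 2 4 (reorder ord_BAC (rho1 R)) = v /\
  (* D(A1B1|C1) *) @discord R 2 4 (reorder ord_CAB (rho1 R)) = v /\
  (* D(C1|A1B1) *) @discord R 4 2 (reorder ord_ABC (rho1 R)) = v /\
  (* D(B1|A1C1) *) @discord R 4 2 (reorder ord_ACB (rho1 R)) = v /\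
  (* D(A1|B1C1) *) @discord R 4 2 (reorder ord_BCA (rho1 R)) = v.
Proof.
move=> v; rewrite !reorder_rho1 //.
by rewrite discord_rho1_2_4 discord_rho1_4_2.
Qed.
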